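(* (1) Let $(w_n)_{n\ge1}$ be a bounded sequence of positive reals with $\lim_{n\to\infty}w_1w_2\cdots w_n=\infty$. Then the unilateral backward shift $B_w$ on $\ell^\infty$, $(B_wy)_n=w_{n+1}y_{n+1}$, is frequently hypercyclic with respect to the weak$^*$-topology $\sigma(\ell^\infty,\ell^1)$. (2) Let $(w_n)_{n\in\mathbb{Z}}$ be a bounded sequence of positive reals with $\lim_{n\to\infty}w_1w_2\cdots w_n=\infty$ and $\lim_{n\to\infty}w_{-1}w_{-2}\cdots w_{-n}=0$. Then the bilateral backward shift $T_w$ on $\ell^\infty(\mathbb{Z})$, $(T_wy)_n=w_{n+1}y_{n+1}$ ($n\in\mathbb{Z}$), is frequently hypercyclic with respect to the weak$^*$-topology $\sigma(\ell^\infty(\mathbb{Z}),\ell^1(\mathbb{Z}))$.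
   Context: An operator $T$ on a topological vector space $(Y,\tau)$ is frequently hypercyclic with respect to $\tau$ if there is $y\in Y$ such that for every nonempty $\tau$-open $U$ the set $A=\{n\in\mathbb{N}:T^ny\in U\}$ has positive lower density $\liminf_{N\to\infty}\mathrm{card}\{n\in A:n\le N\}/N>0$. *)

From Stdlib Require Import Reals Lra Lia ZArith Arith List ClassicalEpsilon.
Open Scope R_scope.

(* Sequences are functions I -> R; the index set I comes with an enumeration
   e : nat -> I (a bijection) used to form the (absolutely convergent) sums
   defining the duality between l^1(I) and l^oo(I). *)

Definition is_linf {I : Type} (y : I -> R) : Prop :=
  exists M : R, forall i, Rabs (y i) <= M.

Definition is_l1 {I : Type} (e : nat -> I) (a : I -> R) : Prop :=
  exists L : R, infinite_sum (fun k => Rabs (a (e k))) L.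

Definition pairing_is {I : Type} (e : nat -> I) (a y : I -> R) (l : R) : Prop :=
  infinite_sum (fun k => a (e k) * y (e k)) l.

Definition weak_star_open {I : Type} (e : nat -> I) (U : (I -> R) -> Prop) : Prop :=
  (forall y, U y -> is_linf y) /\
  forall y, U y ->
    exists (As : list (I -> R)) (eps : R),
      0 < eps /\ Forall (is_l1 e) As /\
      forall z, is_linf z ->
        (forall a, In a As ->
           exists l, pairing_is e a (fun i => z i - y i) l /\ Rabs l < eps) ->
        U z.

Fixpoint card_upto (A : nat -> Prop) (N : nat) : nat :=
  match N with
  | O => O
  | S N' => (if excluded_middle_informative (A (S N')) then 1 else 0)
            + card_upto A N'
  end%nat.

Definition pos_lower_density (A : nat -> Prop) : Prop :=
  exists delta : R, 0 < delta /\
    exists N0 : nat, forall N : nat, (N0 <= N)%nat -> (1 <= N)%nat ->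
      delta <= INR (card_upto A N) / INR N.

Definition freq_hypercyclic_weak_star {I : Type} (e : nat -> I)
    (T : (I -> R) -> (I -> R)) : Prop :=
  exists y : I -> R, is_linf y /\
    forall U : (I -> R) -> Prop,
      weak_star_open e U -> (exists z, U z) ->
      pos_lower_density (fun n => U (Nat.iter n T y)).

Definition zenum (n : nat) : Z :=
  if Nat.even n then Z.of_nat (n / 2) else (- Z.of_nat ((n + 1) / 2))%Z.

(* Unilateral weighted backward shift. Paper indices n >= 1 are shifted to
   k = n - 1 >= 0: y k = y_{k+1}, w k = w_{k+1}; then (B_w y)_n = w_{n+1} y_{n+1}
   becomes (B w y) k = w (k+1) * y (k+1). *)
Definition uni_shift (w : nat -> R) (y : nat -> R) : nat -> R :=
  fun k => w (S k) * y (S k).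

Definition bi_shift (w : Z -> R) (y : Z -> R) : Z -> R :=
  fun n => w (n + 1)%Z * y (n + 1)%Z.

(* w_1 w_2 ... w_n in the shifted nat indexing: prod_{k<n} w k *)
Fixpoint prod_first (w : nat -> R) (n : nat) : R :=
  match n with O => 1 | S m => prod_first w m * w m end.

(* Let T = T_w. Since w_1 ... w_n -> oo and w_-1 ... w_-n -> 0, a vector x
   supported on a finite window [-N, N] can be placed at distance d to the right,
   y = x_{. - d} / (weights), so that T^d y = x on the window, while T^{d'} y stays
   bounded by 1 once |d - d'| exceeds a threshold depending on x.  The weak-*
   topology on bounded sets only sees finitely many coordinates up to a small
   error, so it suffices to hit, with positive lower density, each target of a
   countable family of finitely supported vectors that is dense on every window.
   We place target number t in the blocks s = 2^c (2m + 1), where c codes t and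
   its threshold: blocks are spaced by gaps of size val2 s + val2 s' + 2, so
   blocks of a given 2-adic valuation occur at times of positive density and
   never interfere.  The unilateral case follows by extending the weights by 1/2
   to the left and restricting to the nonnegative coordinates. *)

From Stdlib Require Import Reals ZArith.
From Stdlib Require Import Lra Lia List ClassicalEpsilon FunctionalExtensionality.
Open Scope R_scope.

(** * Counting and lower density *)

Lemma card_upto_subset (A B : nat -> Prop) N :
  (forall n, A n -> B n) -> (card_upto A N <= card_upto B N)%nat.
Proof.
  intros HAB; induction N as [|N IH]; simpl; [lia|].
  destruct (excluded_middle_informative (A (S N))) as [a|a];
  destruct (excluded_middle_informative (B (S N))) as [b|b]; try lia.
  exfalso; apply b, HAB, a.
Qed.

Lemma card_upto_le (A : nat -> Prop) M N :
  (M <= N)%nat -> (card_upto A M <= card_upto A N)%nat.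
Proof.
  intros HMN; induction HMN as [|N _ IH]; [lia|]; simpl.
  destruct (excluded_middle_informative (A (S N))); lia.
Qed.

Lemma card_upto_lt (A : nat -> Prop) M N :
  (M < N)%nat -> A N -> (card_upto A M < card_upto A N)%nat.
Proof.
  intros HMN HA. destruct N as [|N]; [lia|]. simpl.
  destruct (excluded_middle_informative (A (S N))) as [_|nA]; [|contradiction].
  pose proof (card_upto_le A M N ltac:(lia)). lia.
Qed.

Lemma pos_lower_density_subset (A B : nat -> Prop) :
  (forall n, A n -> B n) -> pos_lower_density A -> pos_lower_density B.
Proof.
  intros HAB [delta [Hdelta [N0 HN0]]]. exists delta; split; [exact Hdelta|].
  exists N0; intros N HN HN1.
  apply Rle_trans with (1 := HN0 N HN HN1). unfold Rdiv.
  apply Rmult_le_compat_r.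
  - left; apply Rinv_0_lt_compat, lt_0_INR; lia.
  - apply le_INR, card_upto_subset, HAB.
Qed.

Lemma pos_lower_density_of_increasing (A : nat -> Prop) (f : nat -> nat) (K : nat) :
  (1 <= f 0)%nat -> (forall m, f m < f (S m))%nat ->
  (forall m, f m <= K * S m)%nat -> (forall m, A (f m)) ->
  pos_lower_density A.
Proof.
  intros Hf0 Hinc HfK HA.
  assert (HK : (1 <= K)%nat) by (specialize (HfK 0%nat); lia).
  assert (Hcount : forall m, (S m <= card_upto A (f m))%nat).
  { induction m as [|m IH].
    - pose proof (card_upto_lt A 0 (f 0%nat) ltac:(lia) (HA 0%nat)). simpl in *. lia.
    - pose proof (card_upto_lt A _ _ (Hinc m) (HA (S m))). lia. }
  exists (1 / INR (2 * K)). split; [apply Rdiv_lt_0_compat; [lra | apply lt_0_INR; lia]|].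
  exists (2 * K)%nat. intros N HN _.
  set (q := (N / K)%nat).
  pose proof (Nat.div_mod N K ltac:(lia)) as HNq.
  pose proof (Nat.mod_upper_bound N K ltac:(lia)).
  fold q in HNq.
  assert (Hq : (2 <= q)%nat) by nia.
  assert (Hcard : (q <= card_upto A N)%nat).
  { pose proof (Hcount (q - 1)%nat). pose proof (HfK (q - 1)%nat).
    pose proof (card_upto_le A (f (q - 1)%nat) N ltac:(nia)). lia. }
  assert (HNle : (N <= 2 * K * q)%nat) by nia.
  apply le_INR in Hcard; apply le_INR in HNle. rewrite mult_INR in HNle.
  assert (0 < INR N) by (apply lt_0_INR; lia).
  assert (0 < INR (2 * K)) by (apply lt_0_INR; lia).
  apply (Rmult_le_reg_r (INR N * INR (2 * K))); [apply Rmult_lt_0_compat; lra|].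
  replace (1 / INR (2 * K) * (INR N * INR (2 * K))) with (INR N) by (field; lra).
  replace (INR (card_upto A N) / INR N * (INR N * INR (2 * K)))
    with (INR (card_upto A N) * INR (2 * K)) by (field; lra).
  nra.
Qed.

(** * Pairings with l^1 sequences *)

Lemma cv_sum_scal (al : nat -> R) (L B : R) :
  Un_cv (sum_f_R0 al) L -> Un_cv (sum_f_R0 (fun j => al j * B)) (B * L).
Proof.
  intros HL.
  assert (HB : Un_cv (fun _ => B) B).
  { intros eps Heps; exists 0%nat; intros n _. unfold Rdist. rewrite Rminus_diag, Rabs_R0. lra. }
  intros eps Heps. destruct (CV_mult _ _ _ _ HB HL eps Heps) as [N HN].
  exists N; intros n Hn. rewrite <- scal_sum. apply HN, Hn.
Qed.

Lemma small_fraction (eps x : R) : 0 < eps -> 0 <= x -> eps / (2 * (x + 1)) * x < eps / 2.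
Proof.
  intros Heps Hx. apply (Rmult_lt_reg_r (2 * (x + 1))); [lra|].
  replace (eps / (2 * (x + 1)) * x * (2 * (x + 1))) with (eps * x) by (field; lra).
  nra.
Qed.

Lemma pairing_exists_of_bounded {I : Type} (e : nat -> I) (a dl : I -> R) (B : R) :
  is_l1 e a -> (forall i, Rabs (dl i) <= B) -> exists l, pairing_is e a dl l.
Proof.
  intros [L HL] Hdl.
  assert (Habs : {l | Un_cv (sum_f_R0 (fun j => Rabs (a (e j) * dl (e j)))) l}).
  { apply (Rseries_CV_comp _ (fun j => Rabs (a (e j)) * B)).
    - intro j; split; [apply Rabs_pos|]. rewrite Rabs_mult.
      apply Rmult_le_compat_l; [apply Rabs_pos | apply Hdl].
    - exists (B * L). apply cv_sum_scal, HL. }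
  destruct (cv_cauchy_2 _ (cauchy_abs _ (cv_cauchy_1 _ Habs))) as [l Hl].
  exists l; exact Hl.
Qed.

(* The head of the series is controlled by the smallness of [dl] on the first
   [J] coordinates, its tail by the bound [B] on [dl]. *)
Lemma pairing_small_of_small_head {I : Type} (e : nat -> I) (a : I -> R) (B eps : R) :
  is_l1 e a -> 0 <= B -> 0 < eps ->
  exists J delta, 0 < delta /\ forall dl : I -> R,
    (forall i, Rabs (dl i) <= B) ->
    (forall j, (j < J)%nat -> Rabs (dl (e j)) < delta) ->
    exists l, pairing_is e a dl l /\ Rabs l < eps.
Proof.
  intros Ha HB Heps. destruct Ha as [L HL].
  set (al := fun j => Rabs (a (e j))).
  assert (Hal : forall j, 0 <= al j) by (intro; apply Rabs_pos).
  assert (HL0 : 0 <= L) by (apply Rle_trans with (al 0%nat); [apply Hal | apply (sum_incr al 0 L HL Hal)]).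
  destruct (HL (eps / (2 * (B + 1)))) as [N HN]; [apply Rdiv_lt_0_compat; lra|].
  specialize (HN N (Nat.le_refl N)). unfold Rdist in HN.
  pose proof (sum_incr al N L HL Hal) as HalN.
  rewrite Rabs_minus_sym, Rabs_right in HN by (fold al; lra).
  set (delta := eps / (2 * (L + 1))).
  exists (S N), delta. split; [unfold delta; apply Rdiv_lt_0_compat; lra|].
  intros dl Hdl Hhead.
  set (b := fun j => a (e j) * dl (e j)).
  destruct (pairing_exists_of_bounded e a dl B (ex_intro _ L HL) Hdl) as [l Hl].
  exists l; split; [exact Hl|].
  assert (Htail : Rabs (l - sum_f_R0 b N) <= B * L - sum_f_R0 (fun j => al j * B) N).
  { apply (sum_maj1 (fun j _ => b j) (fun j => al j * B) 0 l (B * L) N Hl).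
    - apply cv_sum_scal, HL.
    - intro j. unfold b, al. rewrite Rabs_mult.
      apply Rmult_le_compat_l; [apply Rabs_pos | apply Hdl]. }
  rewrite <- scal_sum in Htail.
  assert (Hhead_sum : Rabs (sum_f_R0 b N) <= delta * sum_f_R0 al N).
  { eapply Rle_trans; [apply sum_f_R0_triangle|]. rewrite scal_sum.
    apply sum_Rle; intros j Hj. unfold b, al. rewrite Rabs_mult.
    apply Rmult_le_compat_l; [apply Rabs_pos|]. left; apply Hhead; lia. }
  assert (delta * sum_f_R0 al N <= delta * L)
    by (apply Rmult_le_compat_l; [unfold delta; left; apply Rdiv_lt_0_compat; lra | exact HalN]).
  assert (B * (L - sum_f_R0 al N) <= B * (eps / (2 * (B + 1))))
    by (apply Rmult_le_compat_l; [exact HB | fold al in HN; lra]).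
  pose proof (small_fraction eps L Heps HL0).
  pose proof (small_fraction eps B Heps HB).
  pose proof (Rabs_triang (l - sum_f_R0 b N) (sum_f_R0 b N)).
  replace (l - sum_f_R0 b N + sum_f_R0 b N) with l in * by ring.
  replace (B * L - B * sum_f_R0 al N) with (B * (L - sum_f_R0 al N)) in Htail by ring.
  unfold delta in *. lra.
Qed.

Lemma pairings_small_of_small_head {I : Type} (e : nat -> I) (As : list (I -> R)) (B eps : R) :
  Forall (is_l1 e) As -> 0 <= B -> 0 < eps ->
  exists J delta, 0 < delta /\ forall dl : I -> R,
    (forall i, Rabs (dl i) <= B) ->
    (forall j, (j < J)%nat -> Rabs (dl (e j)) < delta) ->
    forall a, In a As -> exists l, pairing_is e a dl l /\ Rabs l < eps.
Proof.
  intros HAs HB Heps. induction HAs as [|a As Ha _ IH].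
  - exists 0%nat, 1. split; [lra|]. intros dl _ _ a [].
  - destruct IH as [J1 [d1 [Hd1 H1]]].
    destruct (pairing_small_of_small_head e a B eps Ha HB Heps) as [J2 [d2 [Hd2 H2]]].
    exists (Nat.max J1 J2), (Rmin d1 d2). split; [apply Rmin_pos; lra|].
    intros dl Hdl Hhead a' [<- | Hin].
    + apply H2; [exact Hdl|]. intros j Hj.
      eapply Rlt_le_trans; [apply Hhead; lia | apply Rmin_r].
    + apply H1; [exact Hdl | | exact Hin]. intros j Hj.
      eapply Rlt_le_trans; [apply Hhead; lia | apply Rmin_l].
Qed.

(** * Dyadic bookkeeping *)

(* [f] is fuel: at most [f] factors 2 are stripped from [m]. *)
Fixpoint pow2_odd_fuel (f m : nat) : nat * nat :=
  match f with
  | O => (0%nat, 0%nat)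
  | S f' => if Nat.even m then let p := pow2_odd_fuel f' (Nat.div2 m) in (S (fst p), snd p)
            else (0%nat, Nat.div2 m)
  end.

Definition pow2_odd (m : nat) : nat * nat := pow2_odd_fuel m m.

Lemma pow2_odd_fuel_eq a u f :
  (a < f)%nat -> pow2_odd_fuel f (2 ^ a * (2 * u + 1)) = (a, u).
Proof.
  revert f; induction a as [|a IH]; intros f Hf; destruct f as [|f]; try lia;
    cbn [pow2_odd_fuel].
  - rewrite Nat.pow_0_r, Nat.mul_1_l, Nat.even_odd, Nat.div2_odd'. reflexivity.
  - replace (2 ^ S a * (2 * u + 1))%nat with (2 * (2 ^ a * (2 * u + 1)))%nat
      by (rewrite Nat.pow_succ_r'; lia).
    rewrite Nat.even_even, Nat.div2_double, IH by lia. reflexivity.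
Qed.

Lemma pow2_odd_eq a u : pow2_odd (2 ^ a * (2 * u + 1)) = (a, u).
Proof.
  apply pow2_odd_fuel_eq. pose proof (Nat.pow_gt_lin_r 2 a ltac:(lia)). nia.
Qed.

Lemma pow2_odd_decomp m : (1 <= m)%nat -> exists a u, m = (2 ^ a * (2 * u + 1))%nat.
Proof.
  induction m as [m IH] using lt_wf_ind. intros Hm.
  destruct (Nat.Even_or_Odd m) as [[k Hk]|[k Hk]].
  - destruct (IH k ltac:(lia) ltac:(lia)) as [a [u Hau]].
    exists (S a), u. rewrite Nat.pow_succ_r'. lia.
  - exists 0%nat, k. simpl. lia.
Qed.

Definition pair_code (a u : nat) : nat := (2 ^ a * (2 * u + 1) - 1)%nat.
Definition unpair (t : nat) : nat * nat := pow2_odd (S t).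

Lemma S_pair_code a u : S (pair_code a u) = (2 ^ a * (2 * u + 1))%nat.
Proof. unfold pair_code. pose proof (Nat.pow_nonzero 2 a ltac:(lia)). nia. Qed.

Lemma unpair_pair_code a u : unpair (pair_code a u) = (a, u).
Proof. unfold unpair. rewrite S_pair_code. apply pow2_odd_eq. Qed.

(* The 2-adic valuation, with the junk value [val2 0 = 0]. *)
Definition val2 (s : nat) : nat := fst (pow2_odd s).

Lemma val2_pow2_odd a u : val2 (2 ^ a * (2 * u + 1)) = a.
Proof. unfold val2; rewrite pow2_odd_eq; reflexivity. Qed.

Lemma val2_odd j : val2 (2 * j + 1) = 0%nat.
Proof.
  replace (2 * j + 1)%nat with (2 ^ 0 * (2 * j + 1))%nat by (simpl; lia).
  apply val2_pow2_odd.
Qed.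

Lemma val2_double j : (1 <= j)%nat -> val2 (2 * j) = S (val2 j).
Proof.
  intros Hj. destruct (pow2_odd_decomp j Hj) as [a [u ->]].
  replace (2 * (2 ^ a * (2 * u + 1)))%nat with (2 ^ S a * (2 * u + 1))%nat
    by (rewrite Nat.pow_succ_r'; lia).
  rewrite !val2_pow2_odd. reflexivity.
Qed.

Fixpoint val2_sum (s : nat) : nat :=
  match s with O => O | S s' => (val2_sum s' + val2 (S s'))%nat end.

Lemma val2_sum_S s : val2_sum (S s) = (val2_sum s + val2 (S s))%nat.
Proof. reflexivity. Qed.

Lemma val2_sum_double j :
  val2_sum (2 * j) = (j + val2_sum j)%nat /\ val2_sum (2 * j + 1) = (j + val2_sum j)%nat.
Proof.
  induction j as [|j [_ IH]]; [split; reflexivity|].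
  assert (Heven : val2_sum (2 * S j) = (S j + val2_sum (S j))%nat).
  { replace (2 * S j)%nat with (S (2 * j + 1)) by lia. rewrite val2_sum_S, IH.
    replace (S (2 * j + 1)) with (2 * S j)%nat by lia.
    rewrite val2_double, (val2_sum_S j) by lia. lia. }
  split; [exact Heven|].
  replace (2 * S j + 1)%nat with (S (2 * S j)) by lia. rewrite val2_sum_S, Heven. replace (S (2 * S j)) with (2 * S j + 1)%nat by lia.
  rewrite val2_odd. lia.
Qed.

Lemma val2_sum_le s : (val2_sum s <= s)%nat.
Proof.
  induction s as [s IH] using lt_wf_ind.
  destruct (Nat.Even_or_Odd s) as [[j Hj]|[j Hj]]; subst s.
  - rewrite (proj1 (val2_sum_double j)).
    destruct j as [|j]; [simpl; lia|]. pose proof (IH (S j) ltac:(lia)). lia.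
  - rewrite (proj2 (val2_sum_double j)).
    destruct j as [|j]; [simpl; lia|]. pose proof (IH (S j) ltac:(lia)). lia.
Qed.

(* Time at which block [s] of the orbit starts. *)
Fixpoint block_start (s : nat) : nat :=
  match s with O => O | S s' => (block_start s' + val2 s' + val2 (S s') + 2)%nat end.

Lemma block_start_le s : (block_start s <= 4 * s)%nat.
Proof.
  assert (H : (block_start s + val2 s <= 2 * s + 2 * val2_sum s)%nat).
  { induction s as [|s IH]; [change (val2 0) with 0%nat; simpl; lia|].
    change (block_start (S s)) with (block_start s + val2 s + val2 (S s) + 2)%nat.
    rewrite val2_sum_S. lia. }
  pose proof (val2_sum_le s). lia.
Qed.

Lemma block_start_gap s s' :
  (s < s')%nat -> (block_start s + val2 s + val2 s' + 2 <= block_start s')%nat.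
Proof.
  intros H; induction H as [|s' _ IH];
    change (block_start (S ?t)) with (block_start t + val2 t + val2 (S t) + 2)%nat; lia.
Qed.

Lemma block_start_lt s s' : (s < s')%nat -> (block_start s < block_start s')%nat.
Proof. intros H. pose proof (block_start_gap s s' H). lia. Qed.

(** * Targets *)

(* Target [t = pair_code N g] lives on the window [-N, N] and takes values in the
   grid (1 / (N + 1)) Z; its digits are read from the stream [g = pair_code d0 g'],
   shifted by (N + 1)^2 so that they are natural numbers. *)
Definition next_code (g : nat) : nat := snd (unpair g).
Definition digit_stream (g i : nat) : nat := fst (unpair (Nat.iter i next_code g)).
Definition target_radius (t : nat) : nat := fst (unpair t).
Definition target_digit (t i : nat) : nat := digit_stream (snd (unpair t)) i.

Definition target (t : nat) (k : Z) : R :=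
  let N := target_radius t in
  (INR (target_digit t (Z.to_nat (k + Z.of_nat N))) - INR ((N + 1) * (N + 1))) / INR (N + 1).

Lemma digit_stream_prescribed (L : nat) (d : nat -> nat) :
  exists g, forall i, (i < L)%nat -> digit_stream g i = d i.
Proof.
  revert d; induction L as [|L IH]; intros d; [exists 0%nat; intros; lia|].
  destruct (IH (fun i => d (S i))) as [g Hg].
  exists (pair_code (d 0%nat) g). intros [|i] Hi; unfold digit_stream.
  - change (Nat.iter 0 next_code ?g) with g. rewrite unpair_pair_code. reflexivity.
  - rewrite Nat.iter_succ_r. unfold next_code at 2. rewrite unpair_pair_code.
    apply Hg. lia.
Qed.

Lemma target_prescribed (N : nat) (d : nat -> nat) :
  exists t, target_radius t = N /\ forall i, (i <= 2 * N)%nat -> target_digit t i = d i.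
Proof.
  destruct (digit_stream_prescribed (S (2 * N)) d) as [g Hg].
  exists (pair_code N g). unfold target_radius, target_digit.
  rewrite unpair_pair_code. split; [reflexivity|]. intros i Hi. apply Hg. lia.
Qed.

Lemma INR_Z_to_nat z : (0 <= z)%Z -> INR (Z.to_nat z) = IZR z.
Proof. intros H. rewrite INR_IZR_INZ, Z2Nat.id by exact H. reflexivity. Qed.

Lemma rounding_error (N : nat) (x : R) :
  Rabs (IZR (up (INR (N + 1) * x)) / INR (N + 1) - x) <= 1 / INR (N + 1).
Proof.
  assert (HN : 0 < INR (N + 1)) by (apply lt_0_INR; lia).
  destruct (archimed (INR (N + 1) * x)) as [Hup1 Hup2].
  replace (IZR (up (INR (N + 1) * x)) / INR (N + 1) - x)
    with ((IZR (up (INR (N + 1) * x)) - INR (N + 1) * x) / INR (N + 1)) by (field; lra).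
  unfold Rdiv. rewrite Rabs_mult, Rabs_right, Rabs_right.
  - apply Rmult_le_compat_r; [left; apply Rinv_0_lt_compat|]; lra.
  - left; apply Rinv_0_lt_compat; lra.
  - lra.
Qed.

Lemma inv_succ_lt (dl : R) (N : nat) :
  0 < dl -> (Z.to_nat (up (/ dl)) <= N)%nat -> 1 / INR (N + 1) < dl.
Proof.
  intros Hdl HN.
  destruct (archimed (/ dl)) as [Hup _].
  assert (Hinv : 0 < / dl) by (apply Rinv_0_lt_compat, Hdl).
  assert (Hup0 : (0 <= up (/ dl))%Z) by (apply le_IZR; lra).
  apply le_INR in HN. rewrite INR_Z_to_nat in HN by exact Hup0.
  rewrite plus_INR; simpl INR.
  apply (Rmult_lt_reg_r (/ dl)); [exact Hinv|].
  replace (dl * / dl) with 1 by (field; lra).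
  replace (1 / (INR N + 1) * / dl) with (/ dl / (INR N + 1)) by (field; split; lra).
  pose proof (pos_INR N).
  apply (Rmult_lt_reg_r (INR N + 1)); [lra|].
  replace (/ dl / (INR N + 1) * (INR N + 1)) with (/ dl) by (field; split; lra). lra.
Qed.

Lemma targets_dense (z0 : Z -> R) (M J : nat) (dl : R) :
  0 < dl -> (forall k, Rabs (z0 k) <= INR M) ->
  exists t, (J <= target_radius t)%nat /\ forall k, (Z.abs k <= Z.of_nat (target_radius t))%Z ->
    Rabs (target t k - z0 k) < dl.
Proof.
  intros Hdl Hz0.
  set (N := Nat.max J (Nat.max M (Z.to_nat (up (/ dl))))).
  set (D := ((N + 1) * (N + 1))%nat).
  set (x := fun k => INR (N + 1) * z0 k).
  destruct (target_prescribed N (fun i => Z.to_nat (up (x (Z.of_nat i - Z.of_nat N)%Z) + Z.of_nat D)))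
    as [t [Ht Hdigits]].
  exists t; rewrite Ht; split; [unfold N; lia|]. intros k Hk. unfold target. rewrite Ht.
  rewrite Hdigits by lia. replace (Z.of_nat (Z.to_nat (k + Z.of_nat N)) - Z.of_nat N)%Z with k by lia.
  fold D.
  assert (HN : 0 < INR (N + 1)) by (apply lt_0_INR; lia).
  assert (Hx : - INR D <= x k).
  { unfold x, D. rewrite mult_INR.
    assert (INR M <= INR (N + 1)) by (apply le_INR; unfold N; lia).
    pose proof (Hz0 k). pose proof (Rle_abs (- z0 k)). rewrite Rabs_Ropp in *.
    pose proof (pos_INR M). nra. }
  destruct (archimed (x k)) as [Hup _].
  rewrite INR_Z_to_nat by (apply le_IZR; rewrite plus_IZR, <- INR_IZR_INZ; lra).
  rewrite plus_IZR, <- INR_IZR_INZ.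
  replace (IZR (up (x k)) + INR D - INR D) with (IZR (up (x k))) by ring.
  eapply Rle_lt_trans; [apply rounding_error | apply inv_succ_lt; [exact Hdl | unfold N; lia]].
Qed.

Lemma is_linf_nat_bound {I : Type} (y : I -> R) :
  is_linf y -> exists M : nat, forall i, Rabs (y i) <= INR M.
Proof.
  intros [B HB]. exists (Z.to_nat (up (Rabs B))).
  destruct (archimed (Rabs B)) as [Hup _]. pose proof (Rabs_pos B).
  rewrite INR_Z_to_nat by (apply le_IZR; lra).
  intro i. pose proof (HB i). pose proof (Rle_abs B). lra.
Qed.

Lemma zenum_abs j : (Z.abs (zenum j) <= Z.of_nat j)%Z.
Proof.
  unfold zenum. destruct (Nat.even j) eqn:E.
  - pose proof (Nat.Div0.div_le_upper_bound j 2 j ltac:(lia)). lia.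
  - assert (j <> 0%nat) by (intro; subst; discriminate).
    pose proof (Nat.Div0.div_le_upper_bound (j + 1) 2 j ltac:(lia)). lia.
Qed.

Lemma window_uniform_bound (P : Z -> nat -> Prop) (N : nat) :
  (forall k D D', (D <= D')%nat -> P k D -> P k D') ->
  (forall k, (Z.abs k <= Z.of_nat N)%Z -> exists D, P k D) ->
  exists D, forall k, (Z.abs k <= Z.of_nat N)%Z -> P k D.
Proof.
  intros Hmono; induction N as [|N IH]; intros Hex.
  - destruct (Hex 0%Z ltac:(lia)) as [D HD]. exists D. intros k Hk.
    replace k with 0%Z by lia. exact HD.
  - destruct IH as [D1 H1]; [intros k Hk; apply Hex; lia|].
    destruct (Hex (Z.of_nat (S N)) ltac:(lia)) as [D2 H2].
    destruct (Hex (- Z.of_nat (S N))%Z ltac:(lia)) as [D3 H3].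
    exists (Nat.max D1 (Nat.max D2 D3)). intros k Hk.
    destruct (Z.eq_dec k (Z.of_nat (S N))) as [->|Hk2]; [eapply Hmono; [|exact H2]; lia|].
    destruct (Z.eq_dec k (- Z.of_nat (S N))%Z) as [->|Hk3]; [eapply Hmono; [|exact H3]; lia|].
    eapply Hmono; [|apply H1; lia]; lia.
Qed.

Lemma Rabs_div_le1 x p : 0 < p -> Rabs x <= p -> Rabs (x / p) <= 1.
Proof.
  intros Hp Hx. unfold Rdiv. rewrite Rabs_mult, Rabs_inv, (Rabs_right p) by lra.
  apply (Rmult_le_reg_r p); [lra|]. rewrite Rmult_assoc, Rinv_l by lra. lra.
Qed.

(** * The bilateral shift *)

Section BilateralShift.

Variable w : Z -> R.
Hypothesis w_pos : forall n, 0 < w n.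
Hypothesis w_prod_right : cv_infty (prod_first (fun k => w (Z.of_nat (S k)))).
Hypothesis w_prod_left : Un_cv (prod_first (fun k => w (- Z.of_nat (S k))%Z)) 0.

Fixpoint wprod (a : Z) (d : nat) : R :=
  match d with O => 1 | S d' => w (a + 1)%Z * wprod (a + 1)%Z d' end.

Lemma wprod_pos a d : 0 < wprod a d.
Proof. revert a; induction d; intros a; simpl; [lra|]. apply Rmult_lt_0_compat; auto. Qed.

Lemma wprod_add a d1 d2 : wprod a (d1 + d2) = wprod a d1 * wprod (a + Z.of_nat d1)%Z d2.
Proof.
  revert a; induction d1 as [|d1 IH]; intros a; simpl.
  - rewrite Z.add_0_r; ring.
  - rewrite IH. replace (a + 1 + Z.of_nat d1)%Z with (a + Z.pos (Pos.of_succ_nat d1))%Z by lia.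
    ring.
Qed.

Lemma wprod_succ_r a d : wprod a (S d) = wprod a d * w (a + Z.of_nat d + 1)%Z.
Proof. rewrite <- Nat.add_1_r, wprod_add. simpl. ring. Qed.

Lemma iter_bi_shift n (y : Z -> R) k :
  Nat.iter n (bi_shift w) y k = wprod k n * y (k + Z.of_nat n)%Z.
Proof.
  revert k; induction n as [|n IH]; intros k; simpl.
  - rewrite Z.add_0_r; ring.
  - unfold bi_shift. rewrite IH.
    replace (k + 1 + Z.of_nat n)%Z with (k + Z.pos (Pos.of_succ_nat n))%Z by lia. ring.
Qed.

Lemma prod_first_right_wprod m : prod_first (fun k => w (Z.of_nat (S k))) m = wprod 0 m.
Proof.
  induction m as [|m IH]; [reflexivity|]. cbn [prod_first].
  rewrite IH, wprod_succ_r. do 2 f_equal. lia.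
Qed.

Lemma prod_first_left_wprod m :
  prod_first (fun k => w (- Z.of_nat (S k))%Z) m = wprod (- Z.of_nat m - 1)%Z m.
Proof.
  induction m as [|m IH]; [reflexivity|]. cbn [prod_first wprod]. rewrite IH, Rmult_comm.
  f_equal; [f_equal; lia | f_equal; lia].
Qed.

Lemma wprod_unbounded k B : exists D, forall d, (D <= d)%nat -> B <= wprod k d.
Proof.
  assert (Hright : cv_infty (wprod 0)).
  { intros M. destruct (w_prod_right M) as [N HN]. exists N. intros n Hn.
    rewrite <- prod_first_right_wprod. apply HN, Hn. }
  destruct (Z_le_gt_dec 0 k) as [Hk|Hk].
  - destruct (Z_of_nat_complete k Hk) as [p ->].
    destruct (Hright (B * wprod 0 p)) as [N HN]. exists N. intros d Hd.
    specialize (HN (p + d)%nat ltac:(lia)). rewrite wprod_add, Z.add_0_l in HN.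
    pose proof (wprod_pos 0 p).
    left. apply (Rmult_lt_reg_l (wprod 0 p)); lra.
  - set (q := Z.to_nat (- k)).
    pose proof (wprod_pos k q).
    destruct (Hright (B / wprod k q)) as [N HN]. exists (q + N)%nat. intros d Hd.
    specialize (HN (d - q)%nat ltac:(lia)).
    replace d with (q + (d - q))%nat by lia. rewrite wprod_add.
    replace (k + Z.of_nat q)%Z with 0%Z by (unfold q; lia).
    left. apply Rmult_lt_compat_l with (r := wprod k q) in HN; [|lra].
    replace (wprod k q * (B / wprod k q)) with B in HN by (field; lra). exact HN.
Qed.

Lemma wprod_left_small k eps :
  0 < eps -> exists D, forall d, (D <= d)%nat -> wprod (k - Z.of_nat d)%Z d <= eps.
Proof.
  intros Heps.
  assert (Hleft : forall eps', 0 < eps' -> exists N, forall m, (N <= m)%nat ->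
            wprod (- Z.of_nat m - 1)%Z m < eps').
  { intros eps' Heps'. destruct (w_prod_left eps' Heps') as [N HN]. exists N. intros m Hm.
    specialize (HN m Hm). unfold Rdist in HN. rewrite prod_first_left_wprod, Rminus_0_r in HN.
    rewrite Rabs_right in HN by (left; apply wprod_pos). exact HN. }
  destruct (Z_le_gt_dec 0 k) as [Hk|Hk].
  - destruct (Z_of_nat_complete k Hk) as [p ->].
    pose proof (wprod_pos (-1) (p + 1)).
    destruct (Hleft (eps / wprod (-1) (p + 1))) as [N HN]; [apply Rdiv_lt_0_compat; lra|].
    exists (p + 1 + N)%nat. intros d Hd.
    specialize (HN (d - p - 1)%nat ltac:(lia)).
    replace d with ((d - p - 1) + (p + 1))%nat at 2 by lia. rewrite wprod_add.
    replace (Z.of_nat p - Z.of_nat d)%Z with (- Z.of_nat (d - p - 1) - 1)%Z by lia.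
    replace (- Z.of_nat (d - p - 1) - 1 + Z.of_nat (d - p - 1))%Z with (-1)%Z by lia.
    left. apply Rmult_lt_compat_r with (r := wprod (-1) (p + 1)) in HN; [|lra].
    replace (eps / wprod (-1) (p + 1) * wprod (-1) (p + 1)) with eps in HN by (field; lra).
    exact HN.
  - set (q := Z.to_nat (- k - 1)).
    pose proof (wprod_pos (- Z.of_nat q - 1) q).
    destruct (Hleft (eps * wprod (- Z.of_nat q - 1) q)) as [N HN]; [apply Rmult_lt_0_compat; lra|].
    exists N. intros d Hd.
    specialize (HN (d + q)%nat ltac:(lia)). rewrite wprod_add in HN.
    replace (- Z.of_nat (d + q) - 1 + Z.of_nat d)%Z with (- Z.of_nat q - 1)%Z in HN by lia.
    replace (- Z.of_nat (d + q) - 1)%Z with (k - Z.of_nat d)%Z in HN by (unfold q; lia).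
    left. apply (Rmult_lt_reg_r (wprod (- Z.of_nat q - 1) q)); lra.
Qed.

(* From time [H] on, the window of target [t] can be placed [d] steps ahead of
   or behind the current block without exceeding modulus 1. *)
Definition threshold_ok (t H : nat) : Prop :=
  (target_radius t + 1 <= H)%nat /\
  forall k, (Z.abs k <= Z.of_nat (target_radius t))%Z -> forall d, (H <= d)%nat ->
    Rabs (target t k) <= wprod k d /\ Rabs (target t k) * wprod (k - Z.of_nat d)%Z d <= 1.

Lemma threshold_exists t : exists H, threshold_ok t H.
Proof.
  set (P := fun k D => forall d, (D <= d)%nat ->
    Rabs (target t k) <= wprod k d /\ Rabs (target t k) * wprod (k - Z.of_nat d)%Z d <= 1).
  destruct (window_uniform_bound P (target_radius t)) as [D HD].
  - intros k D D' HDD' HP d Hd. apply HP. lia.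
  - intros k _. set (x := Rabs (target t k)).
    assert (Hx : 0 <= x) by apply Rabs_pos.
    destruct (wprod_unbounded k x) as [D1 H1].
    destruct (wprod_left_small k (1 / (x + 1))) as [D2 H2]; [apply Rdiv_lt_0_compat; lra|].
    exists (Nat.max D1 D2). intros d Hd. split; [apply H1; lia|].
    specialize (H2 d ltac:(lia)).
    apply Rle_trans with (x * (1 / (x + 1))); [apply Rmult_le_compat_l; assumption|].
    apply (Rmult_le_reg_r (x + 1)); [lra|].
    replace (x * (1 / (x + 1)) * (x + 1)) with x by (field; lra). lra.
  - exists (Nat.max D (target_radius t + 1)). split; [lia|]. intros k Hk d Hd.
    apply (HD k Hk). lia.
Qed.

Definition threshold (t : nat) : nat :=
  proj1_sig (constructive_indefinite_description _ (threshold_exists t)).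

Lemma threshold_spec t : threshold_ok t (threshold t).
Proof. unfold threshold. destruct (constructive_indefinite_description _ _) as [H HH]. exact HH. Qed.

(* Block [s] is devoted to the target coded by the first component of
   [unpair (val2 s)]; it is used only when the gaps around it, which grow with
   [val2 s], exceed the threshold of that target. *)
Definition block_target (s : nat) : nat := fst (unpair (val2 s)).
Definition active (s : nat) : Prop := (1 <= s)%nat /\ (threshold (block_target s) <= S (val2 s))%nat.
Definition in_block (s : nat) (m : Z) : Prop :=
  active s /\ (Z.abs (m - Z.of_nat (block_start s)) <= Z.of_nat (target_radius (block_target s)))%Z.

Lemma active_gap s s' : active s -> active s' -> (s < s')%nat ->
  (block_start s + threshold (block_target s) + threshold (block_target s') <= block_start s')%nat.
Proof. intros [_ H1] [_ H2] Hss'. pose proof (block_start_gap s s' Hss'). lia. Qed.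

Lemma active_start s : active s -> (threshold (block_target s) + 1 <= block_start s)%nat.
Proof. intros [H1 H2]. pose proof (block_start_gap 0 s ltac:(lia)). simpl in *. lia. Qed.

Lemma in_block_unique s s' m : in_block s m -> in_block s' m -> s = s'.
Proof.
  intros [A1 B1] [A2 B2].
  pose proof (proj1 (threshold_spec (block_target s))).
  pose proof (proj1 (threshold_spec (block_target s'))).
  destruct (Nat.lt_total s s') as [Hlt|[Heq|Hlt]]; [|exact Heq|].
  - pose proof (active_gap s s' A1 A2 Hlt). lia.
  - pose proof (active_gap s' s A2 A1 Hlt). lia.
Qed.

(* On each active block, the target divided by the weights that
   [T_w ^ (block_start s)] multiplies it by. *)
Definition fhc_vector (m : Z) : R :=
  match excluded_middle_informative (exists s, in_block s m) with
  | left h => let s := proj1_sig (constructive_indefinite_description _ h) in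
      target (block_target s) (m - Z.of_nat (block_start s))%Z /
      wprod (m - Z.of_nat (block_start s))%Z (block_start s)
  | right _ => 0
  end.

Lemma fhc_vector_in_block s m : in_block s m ->
  fhc_vector m = target (block_target s) (m - Z.of_nat (block_start s))%Z /
                 wprod (m - Z.of_nat (block_start s))%Z (block_start s).
Proof.
  intros H. unfold fhc_vector. destruct (excluded_middle_informative _) as [h|h].
  - destruct (constructive_indefinite_description _ h) as [s' Hs']. simpl.
    rewrite (in_block_unique s' s m Hs' H). reflexivity.
  - exfalso; apply h; exists s; exact H.
Qed.

Lemma fhc_vector_outside m : ~ (exists s, in_block s m) -> fhc_vector m = 0.
Proof.
  intros H. unfold fhc_vector.
  destruct (excluded_middle_informative _) as [h|h]; [contradiction | reflexivity].
Qed.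

Lemma fhc_vector_bound m : Rabs (fhc_vector m) <= 1.
Proof.
  destruct (classic (exists s, in_block s m)) as [[s Hs]|Hn].
  - rewrite (fhc_vector_in_block s m Hs). destruct Hs as [Ha Hwin].
    apply Rabs_div_le1; [apply wprod_pos|].
    apply (proj2 (threshold_spec (block_target s)) _ Hwin). pose proof (active_start s Ha). lia.
  - rewrite (fhc_vector_outside m Hn), Rabs_R0. lra.
Qed.

Lemma orbit_on_window s k : active s ->
  (Z.abs k <= Z.of_nat (target_radius (block_target s)))%Z ->
  Nat.iter (block_start s) (bi_shift w) fhc_vector k = target (block_target s) k.
Proof.
  intros Ha Hk. rewrite iter_bi_shift, (fhc_vector_in_block s).
  - replace (k + Z.of_nat (block_start s) - Z.of_nat (block_start s))%Z with k by lia.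
    pose proof (wprod_pos k (block_start s)). field. lra.
  - split; [exact Ha|]. replace (k + Z.of_nat (block_start s) - Z.of_nat (block_start s))%Z
      with k by lia. exact Hk.
Qed.

Lemma scaled_by_later_block x k dd n :
  Rabs x <= wprod k dd -> Rabs (wprod (k + Z.of_nat dd)%Z n * (x / wprod k (dd + n))) <= 1.
Proof.
  intros Hx. rewrite wprod_add.
  pose proof (wprod_pos k dd). pose proof (wprod_pos (k + Z.of_nat dd) n).
  replace (wprod (k + Z.of_nat dd) n * (x / (wprod k dd * wprod (k + Z.of_nat dd) n)))
    with (x / wprod k dd) by (field; lra).
  apply Rabs_div_le1; assumption.
Qed.

Lemma scaled_by_earlier_block x k dd n :
  Rabs x * wprod (k - Z.of_nat dd)%Z dd <= 1 ->
  Rabs (wprod (k - Z.of_nat dd)%Z (dd + n) * (x / wprod k n)) <= 1.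
Proof.
  intros Hx. rewrite wprod_add. replace (k - Z.of_nat dd + Z.of_nat dd)%Z with k by lia.
  pose proof (wprod_pos (k - Z.of_nat dd) dd). pose proof (wprod_pos k n).
  replace (wprod (k - Z.of_nat dd) dd * wprod k n * (x / wprod k n))
    with (x * wprod (k - Z.of_nat dd) dd) by (field; lra).
  rewrite Rabs_mult, (Rabs_right (wprod _ _)) by lra. exact Hx.
Qed.

(* Outside its window, the orbit at an active block time sees only other blocks,
   at least a threshold away in time. *)
Lemma orbit_off_window s k : active s ->
  (Z.of_nat (target_radius (block_target s)) < Z.abs k)%Z ->
  Rabs (Nat.iter (block_start s) (bi_shift w) fhc_vector k) <= 1.
Proof.
  intros Ha Hk. rewrite iter_bi_shift. set (n := block_start s).
  destruct (classic (exists s', in_block s' (k + Z.of_nat n)%Z)) as [[s' Hs']|Hno].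
  2:{ rewrite (fhc_vector_outside _ Hno), Rmult_0_r, Rabs_R0. lra. }
  rewrite (fhc_vector_in_block s' _ Hs'). set (n' := block_start s').
  set (k' := (k + Z.of_nat n - Z.of_nat n')%Z).
  destruct Hs' as [Ha' Hwin']. fold n' k' in Hwin'.
  pose proof (proj2 (threshold_spec (block_target s')) k' Hwin') as Hthr.
  destruct (Nat.lt_total s s') as [Hlt|[<-|Hlt]].
  - pose proof (active_gap s s' Ha Ha' Hlt). fold n n' in H.
    set (dd := (n' - n)%nat).
    replace k with (k' + Z.of_nat dd)%Z by (unfold k', dd; lia).
    replace n' with (dd + n)%nat by (unfold dd; lia).
    apply scaled_by_later_block, Hthr. unfold dd; lia.
  - exfalso. unfold k', n' in Hwin'. fold n in Hwin'.
    replace (k + Z.of_nat n - Z.of_nat n)%Z with k in Hwin' by lia. lia.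
  - pose proof (active_gap s' s Ha' Ha Hlt). fold n n' in H.
    set (dd := (n - n')%nat).
    replace k with (k' - Z.of_nat dd)%Z by (unfold k', dd; lia).
    replace n with (dd + n')%nat by (unfold dd; lia).
    apply scaled_by_earlier_block, Hthr. unfold dd; lia.
Qed.

Definition block_times (t n : nat) : Prop :=
  exists s, active s /\ block_target s = t /\ block_start s = n.

(* The blocks [s = 2 ^ c * (2 m + 1)], with [c] coding the pair (t, threshold t),
   are all active with target [t]; they form a set of positive density. *)
Lemma block_times_dense t : pos_lower_density (block_times t).
Proof.
  set (c := pair_code t (threshold t)).
  assert (HC : (1 <= 2 ^ c)%nat) by (pose proof (Nat.pow_nonzero 2 c); lia).
  apply (pos_lower_density_of_increasing _ (fun m => block_start (2 ^ c * (2 * m + 1)))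
           (8 * 2 ^ c)).
  - pose proof (block_start_lt 0 (2 ^ c * 1) ltac:(lia)). simpl in *. lia.
  - intro m. apply block_start_lt. nia.
  - intro m. pose proof (block_start_le (2 ^ c * (2 * m + 1))). nia.
  - intro m. exists (2 ^ c * (2 * m + 1))%nat.
    assert (Ht : block_target (2 ^ c * (2 * m + 1)) = t).
    { unfold block_target. rewrite val2_pow2_odd. unfold c. rewrite unpair_pair_code. reflexivity. }
    split; [|split; [exact Ht | reflexivity]].
    split; [nia|]. rewrite Ht, val2_pow2_odd. unfold c. rewrite S_pair_code.
    pose proof (Nat.pow_nonzero 2 t). nia.
Qed.

Theorem bi_shift_freq_hypercyclic : freq_hypercyclic_weak_star zenum (bi_shift w).
Proof.
  exists fhc_vector. split; [exists 1; apply fhc_vector_bound|].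
  intros U [HUbounded HUopen] [z0 Hz0].
  destruct (is_linf_nat_bound z0 (HUbounded z0 Hz0)) as [M HM].
  pose proof (pos_INR M).
  destruct (HUopen z0 Hz0) as [As [eps [Heps [HAs Hnbhd]]]].
  destruct (pairings_small_of_small_head zenum As (2 * INR M + 1) eps HAs)
    as [J [delta [Hdelta Hsmall]]]; [lra | exact Heps|].
  destruct (targets_dense z0 M J (Rmin delta 1)) as [t [HJ Hclose]];
    [apply Rmin_pos; lra | exact HM|].
  apply pos_lower_density_subset with (A := block_times t); [|apply block_times_dense].
  intros n [s [Ha [Ht <-]]].
  set (z := Nat.iter (block_start s) (bi_shift w) fhc_vector).
  assert (Hwin : forall k, (Z.abs k <= Z.of_nat (target_radius t))%Z ->
                   Rabs (z k - z0 k) < Rmin delta 1).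
  { intros k Hk. unfold z. rewrite orbit_on_window, Ht by (rewrite ?Ht; assumption).
    apply Hclose, Hk. }
  assert (Hz : forall k, Rabs (z k) <= INR M + 1).
  { intro k. destruct (Z_le_gt_dec (Z.abs k) (Z.of_nat (target_radius t))) as [Hk|Hk].
    - pose proof (Hwin k Hk). pose proof (Rmin_r delta 1). pose proof (HM k).
      pose proof (Rabs_triang_inv (z k) (z0 k)). lra.
    - pose proof (orbit_off_window s k Ha ltac:(rewrite Ht; lia)). unfold z. lra. }
  apply Hnbhd; [exists (INR M + 1); exact Hz|].
  intros a Ha'. apply Hsmall; [|intros j Hj | exact Ha'].
  - intro i. eapply Rle_trans; [apply Rabs_triang|]. rewrite Rabs_Ropp.
    pose proof (Hz i); pose proof (HM i). lra.
  - eapply Rlt_le_trans; [apply Hwin | apply Rmin_l].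
    pose proof (zenum_abs j). lia.
Qed.
End BilateralShift.

(** * The unilateral shift *)

Definition interleave (u : nat -> R) (k : nat) : R := if Nat.even k then u (k / 2)%nat else 0.

Lemma interleave_sum_double u m :
  sum_f_R0 (interleave u) (2 * m) = sum_f_R0 u m /\
  sum_f_R0 (interleave u) (2 * m + 1) = sum_f_R0 u m.
Proof.
  induction m as [|m [_ IH]]; [unfold interleave; simpl; split; ring|].
  assert (Heven : sum_f_R0 (interleave u) (2 * S m) = sum_f_R0 u (S m)).
  { replace (2 * S m)%nat with (S (2 * m + 1)) by lia. rewrite tech5, IH.
    unfold interleave. replace (S (2 * m + 1)) with (2 * S m)%nat by lia.
    rewrite Nat.even_even, Nat.mul_comm, Nat.div_mul by lia. reflexivity. }
  split; [exact Heven|].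
  replace (2 * S m + 1)%nat with (S (2 * S m)) by lia. rewrite tech5, Heven.
  unfold interleave. replace (S (2 * S m)) with (2 * S m + 1)%nat by lia.
  rewrite Nat.even_odd. ring.
Qed.

Lemma interleave_sum u n : sum_f_R0 (interleave u) n = sum_f_R0 u (n / 2)%nat.
Proof.
  destruct (Nat.Even_or_Odd n) as [[m ->]|[m ->]].
  - rewrite (proj1 (interleave_sum_double u m)), Nat.mul_comm, Nat.div_mul by lia. reflexivity.
  - rewrite (proj2 (interleave_sum_double u m)).
    replace (2 * m + 1)%nat with (1 + m * 2)%nat by lia. rewrite Nat.div_add by lia. reflexivity.
Qed.

Lemma infinite_sum_interleave u L : infinite_sum u L -> infinite_sum (interleave u) L.
Proof.
  intros H eps Heps. destruct (H eps Heps) as [N HN]. exists (2 * N)%nat. intros n Hn.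
  rewrite interleave_sum. apply HN.
  pose proof (Nat.Div0.div_le_mono (2 * N) n 2 Hn). rewrite Nat.mul_comm, Nat.div_mul in H0 by lia.
  lia.
Qed.

Lemma infinite_sum_deinterleave u L : infinite_sum (interleave u) L -> infinite_sum u L.
Proof.
  intros H eps Heps. destruct (H eps Heps) as [N HN]. exists N. intros n Hn.
  specialize (HN (2 * n)%nat ltac:(lia)).
  rewrite interleave_sum, Nat.mul_comm, Nat.div_mul in HN by lia. exact HN.
Qed.

Lemma infinite_sum_ext f g L : (forall k, f k = g k) -> infinite_sum f L -> infinite_sum g L.
Proof.
  intros Hfg H eps Heps. destruct (H eps Heps) as [N HN]. exists N. intros n Hn.
  rewrite <- (sum_eq f g n) by (intros; apply Hfg). apply HN, Hn.
Qed.

Definition zero_ext (a : nat -> R) (n : Z) : R := if (0 <=? n)%Z then a (Z.to_nat n) else 0.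
Definition restrict_nat (y : Z -> R) (k : nat) : R := y (Z.of_nat k).

Lemma zero_ext_zenum a k : zero_ext a (zenum k) = interleave a k.
Proof.
  unfold zero_ext, zenum, interleave. destruct (Nat.even k) eqn:E.
  - replace (0 <=? Z.of_nat (k / 2))%Z with true by (symmetry; apply Z.leb_le; lia).
    rewrite Nat2Z.id. reflexivity.
  - assert (k <> 0%nat) by (intro; subst; discriminate).
    assert (1 <= (k + 1) / 2)%nat by (apply Nat.div_le_lower_bound; lia).
    replace (0 <=? - Z.of_nat ((k + 1) / 2))%Z with false by (symmetry; apply Z.leb_gt; lia).
    reflexivity.
Qed.

Lemma zero_ext_restrict_zenum a y k :
  zero_ext a (zenum k) * y (zenum k) = interleave (fun j => a j * restrict_nat y j) k.
Proof.
  rewrite zero_ext_zenum. unfold interleave, restrict_nat, zenum.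
  destruct (Nat.even k); [reflexivity | ring].
Qed.

Lemma is_l1_zero_ext a : is_l1 (fun k => k) a -> is_l1 zenum (zero_ext a).
Proof.
  intros [L HL]. exists L. apply infinite_sum_interleave in HL. revert HL.
  apply infinite_sum_ext. intro k. rewrite zero_ext_zenum. unfold interleave.
  destruct (Nat.even k); [reflexivity | symmetry; apply Rabs_R0].
Qed.

Lemma pairing_zero_ext a y l :
  pairing_is zenum (zero_ext a) y l -> pairing_is (fun k => k) a (restrict_nat y) l.
Proof.
  intros H. apply infinite_sum_deinterleave. revert H. apply infinite_sum_ext.
  intro k. apply zero_ext_restrict_zenum.
Qed.

Lemma weak_star_open_restrict (U : (nat -> R) -> Prop) :
  weak_star_open (fun k => k) U ->
  weak_star_open zenum (fun z => is_linf z /\ U (restrict_nat z)).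
Proof.
  intros [_ HUopen]. split; [intros z [Hz _]; exact Hz|].
  intros z [_ HzU]. destruct (HUopen _ HzU) as [As [eps [Heps [HAs Hnbhd]]]].
  exists (map zero_ext As), eps. split; [exact Heps|]. split.
  - apply Forall_map. eapply Forall_impl; [exact is_l1_zero_ext | exact HAs].
  - intros z' Hz' Hpair. split; [exact Hz'|]. apply Hnbhd.
    + destruct Hz' as [M HM]. exists M. intro i. apply HM.
    + intros a Ha. destruct (Hpair (zero_ext a) (in_map zero_ext As a Ha)) as [l [Hl Hlt]].
      exists l. split; [exact (pairing_zero_ext a _ l Hl) | exact Hlt].
Qed.

Lemma prod_first_ext f g m : (forall k, f k = g k) -> prod_first f m = prod_first g m.
Proof. intros H; induction m as [|m IH]; simpl; [reflexivity | rewrite IH, H; reflexivity]. Qed.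

Lemma prod_first_succ_l (w : nat -> R) m :
  prod_first w (S m) = w 0%nat * prod_first (fun k => w (S k)) m.
Proof. induction m as [|m IH]; [simpl; ring|]. cbn [prod_first] in *. rewrite IH. ring. Qed.

Section UnilateralShift.

Variable w : nat -> R.
Hypothesis w_pos : forall k, 0 < w k.

(* The unilateral shift is the restriction to [n >= 0] of the bilateral shift whose
   weights are extended by [1/2] to [n <= 0]. *)
Definition ext_weight (n : Z) : R := if (0 <? n)%Z then w (Z.to_nat n) else 1 / 2.

Lemma ext_weight_pos n : 0 < ext_weight n.
Proof. unfold ext_weight. destruct (0 <? n)%Z; [apply w_pos | lra]. Qed.

Lemma ext_weight_succ k : ext_weight (Z.of_nat (S k)) = w (S k).
Proof.
  unfold ext_weight. replace (0 <? Z.of_nat (S k))%Z with true by (symmetry; apply Z.ltb_lt; lia).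
  rewrite Nat2Z.id. reflexivity.
Qed.

Lemma iter_uni_shift_restrict n y :
  Nat.iter n (uni_shift w) (restrict_nat y) = restrict_nat (Nat.iter n (bi_shift ext_weight) y).
Proof.
  induction n as [|n IH]; [reflexivity|]. simpl. rewrite IH.
  apply functional_extensionality. intro k. unfold uni_shift, bi_shift, restrict_nat.
  rewrite <- ext_weight_succ. do 2 f_equal; lia.
Qed.

Lemma uni_shift_fhc_of_ext :
  freq_hypercyclic_weak_star zenum (bi_shift ext_weight) ->
  freq_hypercyclic_weak_star (fun k => k) (uni_shift w).
Proof.
  intros [y [Hy Hfreq]]. exists (restrict_nat y). split.
  { destruct Hy as [M HM]. exists M. intro i. apply HM. }
  intros U HU [z0 Hz0].
  apply pos_lower_density_subset
    with (A := fun n => is_linf (Nat.iter n (bi_shift ext_weight) y) /\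
                        U (restrict_nat (Nat.iter n (bi_shift ext_weight) y))).
  - intros n [_ HUn]. rewrite iter_uni_shift_restrict. exact HUn.
  - apply (Hfreq (fun z => is_linf z /\ U (restrict_nat z))); [apply weak_star_open_restrict, HU|].
    exists (zero_ext z0). destruct (proj1 HU z0 Hz0) as [M HM]. split.
    + exists (Rmax M 0). intro n. unfold zero_ext. destruct (0 <=? n)%Z.
      * eapply Rle_trans; [apply HM | apply Rmax_l].
      * rewrite Rabs_R0. apply Rmax_r.
    + replace (restrict_nat (zero_ext z0)) with z0; [exact Hz0|].
      apply functional_extensionality. intro k. unfold restrict_nat, zero_ext.
      replace (0 <=? Z.of_nat k)%Z with true by (symmetry; apply Z.leb_le; lia).
      rewrite Nat2Z.id. reflexivity.
Qed.

Lemma ext_weight_prod_right :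
  cv_infty (prod_first w) -> cv_infty (prod_first (fun k => ext_weight (Z.of_nat (S k)))).
Proof.
  intros Hw B. destruct (Hw (B * w 0%nat)) as [N HN]. exists N. intros n Hn.
  specialize (HN (S n) ltac:(lia)).
  rewrite prod_first_succ_l in HN. rewrite (prod_first_ext _ (fun k => w (S k))).
  - pose proof (w_pos 0%nat). apply (Rmult_lt_reg_l (w 0%nat)); lra.
  - intro k. apply ext_weight_succ.
Qed.

Lemma ext_weight_prod_left : Un_cv (prod_first (fun k => ext_weight (- Z.of_nat (S k))%Z)) 0.
Proof.
  rewrite (functional_extensionality _ (fun m => (1 / 2) ^ m)).
  - intros eps Heps.
    destruct (pow_lt_1_zero (1 / 2) ltac:(rewrite Rabs_right; lra) eps Heps) as [N HN].
    exists N. intros n Hn. unfold Rdist. rewrite Rminus_0_r. apply HN, Hn.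
  - intro m. induction m as [|m IH]; [reflexivity|]. cbn [prod_first pow]. rewrite IH.
    unfold ext_weight. replace (0 <? - Z.of_nat (S m))%Z with false
      by (symmetry; apply Z.ltb_ge; lia). ring.
Qed.

End UnilateralShift.

Theorem proposition4p9 :
  (* (1) unilateral shift on l^oo(N) *)
  (forall w : nat -> R,
     (forall k, 0 < w k) ->
     (exists M, forall k, w k <= M) ->
     cv_infty (prod_first w) ->
     freq_hypercyclic_weak_star (fun k : nat => k) (uni_shift w))
  /\
  (* (2) bilateral shift on l^oo(Z) *)
  (forall w : Z -> R,
     (forall n, 0 < w n) ->
     (exists M, forall n, w n <= M) ->
     cv_infty (prod_first (fun k => w (Z.of_nat (S k)))) ->
     Un_cv (prod_first (fun k => w (- Z.of_nat (S k))%Z)) 0 ->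
     freq_hypercyclic_weak_star zenum (bi_shift w)).
Proof.
  split.
  - intros w w_pos _ Hright. apply (uni_shift_fhc_of_ext w).
    apply bi_shift_freq_hypercyclic.
    + apply ext_weight_pos, w_pos.
    + apply ext_weight_prod_right; assumption.
    + apply ext_weight_prod_left.
  - intros w w_pos _. apply bi_shift_freq_hypercyclic, w_pos.
Qed.
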